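(* For every $n \geq 1$, the map $\psi$ restricts to a bijection from $\mathcal{S}^{(2)}_n$, the set of skeletons of 2-connected planar linear normal $\lambda$-terms with $n$ atoms, onto $\mathcal{V}^+_{n-1}$, the set of v-trees with $n-1$ edges having no label equal to $0$.
   Context: $\lambda$-terms, linear (closed, each abstraction binds exactly one atom), normal (no sub-term $(\lambda x.u)\,v$) and planar terms are standard; the skeleton is the plane unary-binary tree (atom $\mapsto$ leaf, application $u\,v \mapsto$ binary node with left subtree from $u$ and right from $v$, abstraction $\mapsto$ unary node). The diagram replaces each leaf by an edge from its parent to the binding unary node, drawn counter-clockwise and entering from the right; planar means this can be done without crossings; the term is 2-connected if the diagram is 2-edge-connected. For a unary-binary tree $S$ and node $u$, $S_u$ is the subtree at $u$; $\operatorname{leaf}, \operatorname{unary}$ count leaves and unary nodes. The map $\psi$: for a skeleton $S$ of a planar linear normal term, let $T$ be the plane tree whose nodes are a new root $r$ and the binary nodes of $S$. For a node $u$ of $T$, let $R(u)$ be the right subtree of $u$ in $S$ if $u$ is binary, and $R(r)=S$. The children of $u$ in $T$, left to right, are $x_1,\ldots,x_m$ where $x_1$ is the first binary node of $R(u)$ reached from its root through a (possibly empty) chain of unary nodes, and $x_{i+1}$ is the left child of $x_i$ in $S$ as long as it is binary. Label each binary node $u$ by $\operatorname{leaf}(S_v)-\operatorname{unary}(S_v)$ with $v$ its right child, and $r$ by $\operatorname{leaf}(S_w)-\operatorname{unary}(S_w)$ with $w$ the first non-unary node of $S$. Set $\psi(S)=(T,\ell)$. A v-tree is a plane tree with integer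 node labels $\ell$ such that: (i) leaves have label $0$ or $1$; (ii) every non-root node $u$ with children $v_1,\ldots,v_k$ satisfies $0 \le \ell(u) \le 1+\sum_i \ell(v_i)$; (iii) the root $r$ with children $v_1,\ldots,v_k$ satisfies $\ell(r) = 1+\sum_i \ell(v_i)$. Size = number of edges. *)

From mathcomp Require Import all_boot all_order all_algebra.

Set Implicit Arguments.
Unset Strict Implicit.
Unset Printing Implicit Defensive.

Import GRing.Theory Num.Theory.

(* Lambda terms, in de Bruijn notation: Var i refers to the (i+1)-th   *)
(* enclosing abstraction.  An "atom" is an occurrence of a variable.   *)
Inductive term : Type :=
| Var of nat
| Lam of term
| App of term & term.

(* free variable occurrences, from left to right, as de Bruijn indices
   relative to the outside of the term *)
Fixpoint fv_seq (t : term) : seq nat :=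
  match t with
  | Var i => [:: i]
  | Lam b => [seq i.-1 | i <- fv_seq b & i != 0]
  | App u v => fv_seq u ++ fv_seq v
  end.

Fixpoint all_lams (P : term -> bool) (t : term) : bool :=
  match t with
  | Var _ => true
  | Lam b => P b && all_lams P b
  | App u v => all_lams P u && all_lams P v
  end.

Fixpoint atoms (t : term) : nat :=
  match t with
  | Var _ => 1
  | Lam b => atoms b
  | App u v => atoms u + atoms v
  end.

Definition closed_term (t : term) : bool := fv_seq t == [::].

Definition linear_term (t : term) : bool :=
  closed_term t && all_lams (fun b => count_mem 0 (fv_seq b) == 1) t.

Fixpoint normal (t : term) : bool :=
  match t with
  | Var _ => true
  | Lam b => normal b
  | App u v => (if u is Lam _ then false else true) && normal u && normal v
  end.

(* Planarity: the diagram (each leaf replaced by an edge from its parent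
   to its binder, drawn counterclockwise around the tree and entering the
   binder from the right) has no crossing.  Two such edges, from leaves
   l1 (left of) l2 to binders B1, B2, cross exactly when l2 lies in the
   scope of B1 and B2 is a strict ancestor of B1; i.e. inside the body of
   any abstraction no atom bound further out occurs to the right of the
   atom bound by that abstraction.  Equivalently: the atom bound by each
   abstraction is the last free atom of its body. *)
Definition planar (t : term) : bool :=
  all_lams (fun b => last 1 (fv_seq b) == 0) t.

Inductive ubtree : Type :=
| Leaf
| Unary of ubtree
| Binary of ubtree & ubtree.

Fixpoint skeleton (t : term) : ubtree :=
  match t with
  | Var _ => Leaf
  | Lam b => Unary (skeleton b)
  | App u v => Binary (skeleton u) (skeleton v)
  end.

Fixpoint leafc (S : ubtree) : nat :=
  match S with
  | Leaf => 1
  | Unary S' => leafc S'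
  | Binary l r => leafc l + leafc r
  end.

Fixpoint unaryc (S : ubtree) : nat :=
  match S with
  | Leaf => 0
  | Unary S' => (unaryc S').+1
  | Binary l r => unaryc l + unaryc r
  end.

(* The diagram of a term, as a multigraph.  Nodes of the skeleton are   *)
(* addressed by (reversed) paths from the root: 0 = left/unique child,  *)
(* 1 = right child.  Vertices: the non-leaf nodes.  Edges: the skeleton *)
(* edges between non-leaf nodes, plus, for each leaf, an edge from its  *)
(* parent to the abstraction binding it.                                *)
Definition addr := seq nat.

Definition child_edge (c : term) (pc p : addr) (stk : seq addr)
  : seq (addr * addr) :=
  match c with
  | Var i => [:: (p, nth [::] stk i)]
  | _ => [:: (p, pc)]
  end.

(* stk: addresses of the enclosing abstractions, innermost first *)
Fixpoint dedges (t : term) (p : addr) (stk : seq addr) : seq (addr * addr) :=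
  match t with
  | Var _ => [::]
  | Lam b => child_edge b (0 :: p) p (p :: stk) ++ dedges b (0 :: p) (p :: stk)
  | App u v => child_edge u (0 :: p) p stk ++ child_edge v (1 :: p) p stk
               ++ dedges u (0 :: p) stk ++ dedges v (1 :: p) stk
  end.

Fixpoint dverts (t : term) (p : addr) : seq addr :=
  match t with
  | Var _ => [::]
  | Lam b => p :: dverts b (0 :: p)
  | App u v => p :: (dverts u (0 :: p) ++ dverts v (1 :: p))
  end.

Inductive linked (E : seq (addr * addr)) : addr -> addr -> Prop :=
| linked_refl x : linked E x x
| linked_step x y z (e : addr * addr) :
    e \in E -> ((e.1 == x) && (e.2 == y)) || ((e.2 == x) && (e.1 == y)) ->
    linked E y z -> linked E x z.

Definition two_edge_connected (V : seq addr) (E : seq (addr * addr)) : Prop :=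
  (forall x y, x \in V -> y \in V -> linked E x y) /\
  (forall i, i < size E ->
     forall x y, x \in V -> y \in V -> linked (take i E ++ drop i.+1 E) x y).

Definition two_connected (t : term) : Prop :=
  two_edge_connected (dverts t [::]) (dedges t [::] [::]).

Definition S2 (n : nat) (S : ubtree) : Prop :=
  exists t : term, linear_term t /\ normal t /\ planar t /\ two_connected t /\
                   atoms t = n /\ skeleton t = S.

Inductive ltree : Type := LNode of int & seq ltree.

Definition label (T : ltree) : int := let: LNode l _ := T in l.
Definition kids (T : ltree) : seq ltree := let: LNode _ cs := T in cs.

Fixpoint lnodes (T : ltree) : nat :=
  let: LNode _ cs := T in (sumn (map lnodes cs)).+1.

Definition lsize (T : ltree) : nat := (lnodes T).-1.

Definition sum_labels (cs : seq ltree) : int := \sum_(c <- cs) label c.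

Definition leaf_ok (T : ltree) : bool :=
  let: LNode l cs := T in (nilp cs) ==> ((l == 0) || (l == 1))%R.

Fixpoint nonroot_ok (T : ltree) : bool :=
  let: LNode l cs := T in
  [&& leaf_ok T, (0 <= l)%R, (l <= 1 + sum_labels cs)%R & all nonroot_ok cs].

Definition vtree (T : ltree) : bool :=
  let: LNode l cs := T in
  [&& leaf_ok T, (l == 1 + sum_labels cs)%R & all nonroot_ok cs].

Fixpoint all_labels (P : int -> bool) (T : ltree) : bool :=
  let: LNode l cs := T in P l && all (all_labels P) cs.

Definition Vplus (m : nat) (T : ltree) : Prop :=
  [/\ vtree T, lsize T = m & all_labels (fun l => l != 0%R) T].

Definition lu (S : ubtree) : int := (leafc S)%:Z - (unaryc S)%:Z.

(* children (in T) of a node u with R(u) = R: descend R through unary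
   nodes to the first binary node x1, then follow left children
   x2, x3, ... as long as they are binary; a binary node x with right
   child r gets label leaf(r) - unary(r) and R(x) = r. *)
Fixpoint psi_kids (R : ubtree) : seq ltree :=
  match R with
  | Leaf => [::]
  | Unary R' => psi_kids R'
  | Binary l r =>
      LNode (lu r) (psi_kids r) :: (if l is Binary _ _ then psi_kids l else [::])
  end.

Fixpoint strip_unary (S : ubtree) : ubtree :=
  if S is Unary S' then strip_unary S' else S.

Definition psi (S : ubtree) : ltree := LNode (lu (strip_unary S)) (psi_kids S).

(** The skeleton of a linear term determines, at each node, the number of
    free atoms of the subterm there: it is [leaf - unary] of the subtree.  The
    diagram of a closed term is 2-edge-connected exactly when every proper
    subterm has a free atom.  Indeed, if the subterm at [u] is closed, the
    edge entering [u] is the only edge leaving the subtree of [u], hence a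
    bridge; conversely, the edge entering [u] can be bypassed through the edge
    of a free atom of that subterm, which leads to a binder strictly above [u].
    Hence [S^(2)_n] consists of the skeletons with [n] leaves and
    [leaf = unary] that have no binary node with a unary left child and have
    [leaf - unary > 0] at every proper subtree (planar terms realising them
    are obtained by letting every abstraction bind the rightmost atom of its
    body).  Under [psi] these conditions are exactly the v-tree conditions with
    non-zero labels, and [psi] is inverted node by node: a node with label [l]
    and children [cs] comes from a left spine of binary nodes carrying the
    subtrees of [cs], below [1 + sum(labels of cs) - l] unary nodes. *)

From mathcomp Require Import all_boot all_order all_algebra.
From mathcomp Require Import zify.

Set Implicit Arguments.
Unset Strict Implicit.
Unset Printing Implicit Defensive.

Import Num.Theory.

(** * Paths and cuts in the diagram *)

Lemma linked_trans E x y z : linked E x y -> linked E y z -> linked E x z.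
Proof. by elim=> // x1 y1 z1 e eE exy _ IH /IH; apply: linked_step eE exy. Qed.

Lemma linked_edge E x y z :
  (x, y) \in E \/ (y, x) \in E -> linked E y z -> linked E x z.
Proof. by case=> xyE; apply: linked_step xyE _; rewrite /= !eqxx ?orbT. Qed.

Lemma linked_sym E x y : linked E x y -> linked E y x.
Proof.
elim=> [x1|x1 y1 z1 e eE exy _ IH]; first exact: linked_refl.
apply: linked_trans IH (linked_edge _ (linked_refl _ _)).
by case/orP: exy => /andP[/eqP <- /eqP <-]; rewrite -surjective_pairing; [right|left].
Qed.

Lemma linked_sub E F x y : {subset E <= F} -> linked E x y -> linked F x y.
Proof.
move=> sEF; elim=> [x1|x1 y1 z1 e eE exy _ IH]; first exact: linked_refl.
exact: linked_step (sEF _ eE) exy IH.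
Qed.

Lemma linked_same_side (P : pred addr) E x y :
  ~~ has (fun e : addr * addr => P e.1 != P e.2) E -> linked E x y -> P x = P y.
Proof.
move/hasPn=> noE; elim=> // x1 y1 z1 e eE exy _ <-.
move/negPn/eqP: (noE e eE).
by case/orP: exy => /andP[/eqP <- /eqP <-].
Qed.

Lemma mem_take_drop_nth (T : eqType) (s : seq T) x0 i x :
  i < size s -> x \in s -> x != nth x0 s i -> x \in take i s ++ drop i.+1 s.
Proof.
move=> ltis; rewrite -{1}(cat_take_drop i s) (drop_nth x0 ltis) !mem_cat inE.
by case/or3P=> [->|/eqP->|->]; rewrite ?eqxx ?orbT.
Qed.

Lemma suffix_same_size (T : eqType) (s1 s2 t : seq T) :
  suffix s1 t -> suffix s2 t -> size s1 = size s2 -> s1 = s2.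
Proof. by move=> + + eq_size; rewrite !suffixE eq_size => /eqP <- /eqP. Qed.

Definition is_var (t : term) : bool := if t is Var _ then true else false.

(* [occurs c a s t p stk]: when [t] sits at address [p] under the binder
   stack [stk] (as in [dedges t p stk]), its subterm [c] sits at address [a]
   under the binder stack [s]. *)
Inductive occurs (c : term) (a : addr) (s : seq addr) :
  term -> addr -> seq addr -> Prop :=
| occurs_refl : occurs c a s c a s
| occurs_lam b p stk :
    occurs c a s b (0 :: p) (p :: stk) -> occurs c a s (Lam b) p stk
| occurs_appl u v p stk :
    occurs c a s u (0 :: p) stk -> occurs c a s (App u v) p stk
| occurs_appr u v p stk :
    occurs c a s v (1 :: p) stk -> occurs c a s (App u v) p stk.

Section Occurrences.

Variables (c : term) (a : addr) (s : seq addr).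

Lemma occurs_suffix t p stk : occurs c a s t p stk -> suffix p a.
Proof.
elim=> [|b ? ? _ IH|u v ? ? _ IH|u v ? ? _ IH]; first exact: suffix_refl.
all: exact: suffix_trans (suffix_cons _ _) IH.
Qed.

Lemma occurs_top t stk : occurs c a s t a stk -> c = t /\ s = stk.
Proof.
suff top p : occurs c a s t p stk -> size a <= size p -> c = t /\ s = stk.
  by move/top; apply.
by case=> // [b|u v|u v] p' stk' /occurs_suffix /size_suffix /=; lia.
Qed.

Lemma occurs_vertex t p stk :
  occurs c a s t p stk -> ~~ is_var c -> a \in dverts t p.
Proof.
move=> + nvar; elim=> [|b ? ? _ IH|u v ? ? _ IH|u v ? ? _ IH].
  by case: c nvar => // *; rewrite inE eqxx.
all: by rewrite /= inE ?mem_cat IH ?orbT.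
Qed.

Lemma occurs_dedges t p stk :
  occurs c a s t p stk -> {subset dedges c a s <= dedges t p stk}.
Proof.
by elim=> // [b|u v|u v] p' stk' _ IH e /IH; rewrite /= !mem_cat => ->; rewrite ?orbT.
Qed.

Lemma child_edge_parent b q p stk : ~~ is_var b -> (p, q) \in child_edge b q p stk.
Proof. by case: b => // *; rewrite inE. Qed.

Lemma occurs_parent t p stk : occurs c a s t p stk -> a != p -> ~~ is_var c ->
  exists a', [/\ a' \in dverts t p, size a' < size a & (a', a) \in dedges t p stk].
Proof.
elim=> [|b q stk' occ IH|u v q stk' occ IH|u v q stk' occ IH] /=.
  by rewrite eqxx.
all: move=> _ nvar.
- have [eq_a|/IH/(_ nvar)[a' [a'V lt_a' a'E]]] := eqVneq a (0 :: q).
    move: occ; rewrite -{1}eq_a => /occurs_top[eq_c _]; rewrite eq_a.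
    by exists q; rewrite inE eqxx !mem_cat child_edge_parent -?eq_c.
  by exists a'; rewrite inE mem_cat a'V a'E !orbT.
- have [eq_a|/IH/(_ nvar)[a' [a'V lt_a' a'E]]] := eqVneq a (0 :: q).
    move: occ; rewrite -{1}eq_a => /occurs_top[eq_c _]; rewrite eq_a.
    by exists q; rewrite inE eqxx !mem_cat child_edge_parent -?eq_c.
  by exists a'; rewrite inE !mem_cat a'V a'E !orbT.
have [eq_a|/IH/(_ nvar)[a' [a'V lt_a' a'E]]] := eqVneq a (1 :: q).
  move: occ; rewrite -{1}eq_a => /occurs_top[eq_c _]; rewrite eq_a.
  by exists q; rewrite inE eqxx !mem_cat child_edge_parent -?eq_c ?orbT.
by exists a'; rewrite inE !mem_cat a'V a'E !orbT.
Qed.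

End Occurrences.

Lemma vertex_occurs t p stk a :
  a \in dverts t p -> exists c s, occurs c a s t p stk /\ ~~ is_var c.
Proof.
elim: t p stk => [//|b IH|u IHu v IHv] p stk /=; rewrite inE => /predU1P[->|].
- by exists (Lam b), stk; split; first exact: occurs_refl.
- case/(IH _ (p :: stk))=> c [s [occ nvar]].
  by exists c, s; split; first exact: occurs_lam.
- by exists (App u v), stk; split; first exact: occurs_refl.
rewrite mem_cat => /orP[/(IHu _ stk)|/(IHv _ stk)] [c [s [occ nvar]]]; exists c, s.
  by split; first exact: occurs_appl.
by split; first exact: occurs_appr.
Qed.
Lemma occurs_binder c a s t p stk i :
  occurs c a s t p stk -> i \in fv_seq c ->
  (exists2 j, j \in fv_seq t & nth [::] s i = nth [::] stk j) \/
  (nth [::] s i \in dverts t p /\ size (nth [::] s i) < size a).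
Proof.
move=> + ic; elim=> [|b q stk' occ IH|u v q stk' occ IH|u v q stk' occ IH].
- by left; exists i.
- case: IH => [[[|j] jb ->]|[bV lt_a]] /=.
  + right; rewrite inE eqxx; split=> //.
    by have /size_suffix /= := occurs_suffix occ.
  + by left; exists j => //; apply/mapP; exists j.+1; rewrite ?mem_filter.
  + by right; rewrite inE bV orbT.
- case: IH => [[j ju ->]|[uV lt_a]]; first by left; exists j; rewrite ?mem_cat ?ju.
  by right; rewrite inE mem_cat uV orbT.
- case: IH => [[j jv ->]|[vV lt_a]]; first by left; exists j; rewrite ?mem_cat ?jv ?orbT.
  by right; rewrite inE mem_cat vV !orbT.
Qed.

Lemma occurs_all_lams (P : pred term) c a s t p stk :
  occurs c a s t p stk -> all_lams P t -> all_lams P c.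
Proof.
by elim=> // [b|u v|u v] > _ IH /= => [/andP[_]|/andP[+ _]|/andP[_ +]].
Qed.

Definition link_edges (c : term) (a p : addr) (stk : seq addr) :=
  child_edge c a p stk ++ dedges c a stk.

Lemma linked_link_edges c a p stk i :
  i \in fv_seq c -> linked (link_edges c a p stk) p (nth [::] stk i).
Proof.
elim: c a p stk i => [k|b IH|u IHu v IHv] a p stk i /=.
- rewrite inE => /eqP ->.
  by apply: linked_edge (linked_refl _ _); left; rewrite inE.
- case/mapP=> [[|j]]; rewrite mem_filter //= => jb ->.
  apply: linked_edge (linked_sub _ (IH (0 :: a) a (a :: stk) j.+1 jb)).
    by left; rewrite inE eqxx.
  by move=> e; rewrite /link_edges inE orbC => ->.
rewrite mem_cat => /orP[/(IHu (0 :: a) a stk)|/(IHv (1 :: a) a stk)] lk.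
all: apply: linked_edge (linked_sub _ lk); first by left; rewrite inE eqxx.
all: by move=> e; rewrite /link_edges !(inE, mem_cat) => /orP[]->; rewrite ?orbT.
Qed.

Lemma linked_free_var c a s i : ~~ is_var c -> i \in fv_seq c ->
  linked (dedges c a s) a (nth [::] s i).
Proof.
case: c => [//|b|u v] _ /=.
- case/mapP=> [[|j]]; rewrite mem_filter //= => jb ->.
  exact: (linked_link_edges (0 :: a) a (a :: s) jb).
rewrite mem_cat => /orP[/(linked_link_edges (0 :: a) a s)|
                       /(linked_link_edges (1 :: a) a s)].
all: by apply: linked_sub => e; rewrite /link_edges !mem_cat => /orP[]->; rewrite ?orbT.
Qed.

Lemma dedges_suffix c a s e : e \in dedges c a s -> suffix a e.1.
Proof.
have child_fst d b p stk : e \in child_edge b d p stk -> e.1 = p.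
  by case: b => [k|b|u v]; rewrite inE => /eqP->.
elim: c a s => [//|b IH|u IHu v IHv] a s /=; rewrite !mem_cat.
- case/orP=> [/child_fst->|/IH]; first exact: suffix_refl.
  exact: suffix_trans (suffix_cons _ _).
case/or4P=> [/child_fst->|/child_fst->|/IHu|/IHv]; rewrite ?suffix_refl //.
all: exact: suffix_trans (suffix_cons _ _).
Qed.

(* The number of edges of [E] with exactly one end in the subtree rooted at
   [pc], whose addresses are those having [pc] as a suffix. *)
Definition crossing (pc : addr) (E : seq (addr * addr)) : nat :=
  count (fun e : addr * addr => suffix pc e.1 != suffix pc e.2) E.

Section Cut.

Variable pc : addr.

Lemma crossing_link_var k a p stk :
  crossing pc (link_edges (Var k) a p stk) =
  (suffix pc p != suffix pc (nth [::] stk k)).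
Proof. by rewrite /crossing /= addn0. Qed.

Lemma crossing_link_nonvar c a p stk : ~~ is_var c ->
  crossing pc (link_edges c a p stk) =
  (suffix pc p != suffix pc a) + crossing pc (dedges c a stk).
Proof. by case: c. Qed.

Lemma crossing_dedges_lam b a stk :
  crossing pc (dedges (Lam b) a stk) = crossing pc (link_edges b (0 :: a) a (a :: stk)).
Proof. by []. Qed.

Lemma crossing_dedges_app u v a stk :
  crossing pc (dedges (App u v) a stk) =
  crossing pc (link_edges u (0 :: a) a stk) + crossing pc (link_edges v (1 :: a) a stk).
Proof. by rewrite /link_edges /crossing /= !count_cat addnACA !addnA. Qed.

Lemma crossing_link_inside c a p stk : suffix pc p -> suffix p a ->
  crossing pc (link_edges c a p stk) =
  count (fun i => ~~ suffix pc (nth [::] stk i)) (fv_seq c).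
Proof.
elim: c a p stk => [k|b IH|u IHu v IHv] a p stk pc_p p_a.
  by rewrite crossing_link_var pc_p /= addn0.
all: have pc_a := suffix_trans pc_p p_a.
all: rewrite crossing_link_nonvar // pc_p pc_a add0n.
- rewrite crossing_dedges_lam IH ?suffix_cons // count_map count_filter.
  by apply: eq_count => -[|i] /=; rewrite ?pc_a ?andbF ?andbT.
by rewrite crossing_dedges_app IHu ?IHv ?suffix_cons // count_cat.
Qed.

Lemma crossing_dedges_inside c a stk : ~~ is_var c -> suffix pc a ->
  crossing pc (dedges c a stk) =
  count (fun i => ~~ suffix pc (nth [::] stk i)) (fv_seq c).
Proof.
move=> nvar pc_a; rewrite -(crossing_link_inside c stk pc_a (suffix_refl a)).
by rewrite crossing_link_nonvar // eqxx.
Qed.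

Lemma crossing_link_outside c a p stk :
  (forall i, ~~ suffix pc (nth [::] stk i)) -> ~~ suffix pc p ->
  (forall x, suffix a x -> ~~ suffix pc x) ->
  crossing pc (link_edges c a p stk) = 0.
Proof.
elim: c a p stk => [k|b IH|u IHu v IHv] a p stk out_stk out_p out_a.
  by rewrite crossing_link_var (negbTE out_p) (negbTE (out_stk k)).
all: have out_child d x : suffix (d :: a) x -> ~~ suffix pc x
       := fun dax => out_a x (suffix_trans (suffix_cons a d) dax).
all: have /negbTE out_a0 := out_a a (suffix_refl a).
all: rewrite crossing_link_nonvar // (negbTE out_p) out_a0 add0n.
- rewrite crossing_dedges_lam IH ?out_a0 //; last exact: out_child.
  by case=> [|i] /=; rewrite ?out_a0 ?out_stk.
by rewrite crossing_dedges_app IHu ?IHv ?out_a0 //; apply: out_child.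
Qed.

Lemma crossing_link_occurs c0 s0 c a stk p :
  occurs c0 pc s0 c a stk -> ~~ is_var c0 ->
  (forall i, ~~ suffix pc (nth [::] stk i)) -> ~~ suffix pc p ->
  crossing pc (link_edges c a p stk) = (size (fv_seq c0)).+1.
Proof.
move=> occ nvar.
elim: occ p => [|b q stk' occ IH|u v q stk' occ IH|u v q stk' occ IH] p out_stk out_p.
  rewrite crossing_link_nonvar // crossing_dedges_inside ?suffix_refl //.
  rewrite (negbTE out_p) -(count_predT (fv_seq c0)).
  by congr (_ + _); apply: eq_count => i; rewrite out_stk.
all: have /negbTE out_q : ~~ suffix pc q
       by apply/negP=> /size_suffix; have /size_suffix /= := occurs_suffix occ; lia.
all: rewrite crossing_link_nonvar // (negbTE out_p) out_q add0n.
- by rewrite crossing_dedges_lam IH ?out_q // => -[|i] /=; rewrite ?out_q ?out_stk.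
all: rewrite crossing_dedges_app IH ?out_q // crossing_link_outside ?out_q ?addn0 //.
all: move=> x qx; apply/negP=> /(suffix_trans (occurs_suffix occ)).
all: by move/suffix_same_size/(_ qx)/(_ erefl).
Qed.

Lemma crossing_occurs_root c0 s0 t : pc != [::] ->
  occurs c0 pc s0 t [::] [::] -> ~~ is_var c0 ->
  crossing pc (dedges t [::] [::]) = (size (fv_seq c0)).+1.
Proof.
(* Hang [t] below a fictitious parent [[::]]: this only adds the loop at [[::]]. *)
move=> pc0 occ nvar; rewrite -(crossing_link_occurs (p := [::]) occ nvar); last first.
- by rewrite suffixs0.
- by move=> i; rewrite nth_nil suffixs0.
case: t {occ} => [k|b|u v]; first by rewrite crossing_link_var nth_nil eqxx.
all: by rewrite [in RHS]crossing_link_nonvar // eqxx.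
Qed.

End Cut.

Lemma dverts_root t p a : a \in dverts t p -> p \in dverts t p.
Proof. by case: t => //= *; rewrite inE eqxx. Qed.

Lemma two_connected_fv t c a s : two_connected t ->
  occurs c a s t [::] [::] -> a != [::] -> fv_seq c != [::].
Proof.
move=> [_ tc_rem] occ a0.
have [var|nvar] := boolP (is_var c); first by case: c var {occ}.
apply/eqP=> fv0; have := crossing_occurs_root a0 occ nvar; rewrite fv0.
set E := dedges t [::] [::] => cross1.
have /hasP[e eE cross_e] : has (fun e : addr * addr => suffix a e.1 != suffix a e.2) E.
  by rewrite has_count -/(crossing a E) cross1.
have aV := occurs_vertex occ nvar.
have ltiE : index e E < size E by rewrite index_mem.
have := tc_rem (index e E) ltiE a [::] aV (dverts_root aV).
rewrite -remE => /(linked_same_side (P := suffix a)).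
rewrite has_count count_rem -/(crossing a E) cross1 eE cross_e.
by rewrite suffix_refl suffixs0 (negbTE a0) => /(_ isT).
Qed.

Section LinkedToRoot.

Variables (t : term) (F : seq (addr * addr)) (e0 : addr * addr).
Hypothesis t_closed : closed_term t.
Hypothesis fv_proper : forall c a s,
  occurs c a s t [::] [::] -> a != [::] -> fv_seq c != [::].
Hypothesis sub_F : forall e, e \in dedges t [::] [::] -> e != e0 -> e \in F.

Lemma linked_root a : a \in dverts t [::] -> linked F a [::].
Proof.
have [n] := ubnP (size a); elim: n a => // n IHn a /ltnSE le_a_n aV.
have [->|a0] := eqVneq a [::]; first exact: linked_refl.
have [c [s [occ nvar]]] := vertex_occurs [::] aV.
have [a' [a'V lt_a'a a'E]] := occurs_parent occ a0 nvar.
have [e0E|ne0] := eqVneq (a', a) e0; last first.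
  apply: linked_edge (IHn _ (leq_trans lt_a'a le_a_n) a'V).
  by right; apply: sub_F.
(* The edge entering [a] is [e0]: bypass it through a free atom of [c]. *)
have := fv_proper occ a0; case fvc: (fv_seq c) => [//|i rest] _.
have ic : i \in fv_seq c by rewrite fvc mem_head.
case: (occurs_binder occ ic) => [[j]|[bV lt_ba]].
  by move/eqP: t_closed => ->.
apply: linked_trans (IHn _ (leq_trans lt_ba le_a_n) bV).
apply: linked_sub (linked_free_var a s nvar ic) => e eC.
apply: sub_F; first exact: occurs_dedges occ _ eC.
apply: contraTneq (dedges_suffix eC) => ->; rewrite -e0E /=.
by apply/negP=> /size_suffix; rewrite leqNgt lt_a'a.
Qed.

End LinkedToRoot.

Lemma fv_two_connected t : closed_term t ->
  (forall c a s, occurs c a s t [::] [::] -> a != [::] -> fv_seq c != [::]) ->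
  two_connected t.
Proof.
move=> t_closed fv_proper.
have linked_in F e0 : (forall e, e \in dedges t [::] [::] -> e != e0 -> e \in F) ->
    forall x y, x \in dverts t [::] -> y \in dverts t [::] -> linked F x y.
  move=> sub_F x y xV yV; have root := linked_root t_closed fv_proper sub_F.
  exact: linked_trans (root x xV) (linked_sym (root y yV)).
split=> [|i ltiE]; first exact: (linked_in _ ([::], [::])).
exact: linked_in _ _ (fun e => mem_take_drop_nth (x0 := ([::], [::])) ltiE).
Qed.

(** * Skeletons of 2-connected terms *)

Definition lu_pos (S : ubtree) : bool := unaryc S < leafc S.

Fixpoint all_sub (P : pred ubtree) (S : ubtree) : bool :=
  match S with
  | Leaf => true
  | Unary S' => P S' && all_sub P S'
  | Binary l r => [&& P l, P r, all_sub P l & all_sub P r]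
  end.

Lemma occurs_all_sub (P : pred ubtree) c a s t p stk :
  occurs c a s t p stk -> a != p -> all_sub P (skeleton t) -> P (skeleton c).
Proof.
have top q t' stk' : occurs c a s t' q stk' -> a = q -> P (skeleton t') -> P (skeleton c).
  by move=> + eq_aq; rewrite eq_aq => /occurs_top[->].
elim=> [|b q stk' occ IH|u v q stk' occ IH|u v q stk' occ IH] /=; rewrite ?eqxx // => _.
- case/andP=> Pb Pbs; have [/(top _ _ _ occ)|] := eqVneq a (0 :: q); first exact.
  by move/IH; apply.
- case/and4P=> Pu _ Pus _; have [/(top _ _ _ occ)|] := eqVneq a (0 :: q); first exact.
  by move/IH; apply.
case/and4P=> _ Pv _ Pvs; have [/(top _ _ _ occ)|] := eqVneq a (1 :: q); first exact.
by move/IH; apply.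
Qed.

Lemma all_sub_occurs (P : pred ubtree) t p stk :
  (forall c a s, occurs c a s t p stk -> a != p -> P (skeleton c)) ->
  all_sub P (skeleton t).
Proof.
have proper c a s t' d q stk' : occurs c a s t' (d :: q) stk' -> a != q.
  move/occurs_suffix/size_suffix=> /= lt_qa.
  by apply/eqP=> eq_aq; rewrite eq_aq ltnn in lt_qa.
elim: t p stk => [//|b IH|u IHu v IHv] p stk Pocc /=.
  have Pb c a s (occ : occurs c a s b _ _) :=
    Pocc c a s (occurs_lam occ) (proper _ _ _ _ _ _ _ occ).
  by rewrite (Pb _ _ _ (occurs_refl _ _ _)) (IH _ _ (fun c a s occ _ => Pb c a s occ)).
have Pu c a s (occ : occurs c a s u _ _) :=
  Pocc c a s (occurs_appl v occ) (proper _ _ _ _ _ _ _ occ).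
have Pv c a s (occ : occurs c a s v _ _) :=
  Pocc c a s (occurs_appr u occ) (proper _ _ _ _ _ _ _ occ).
rewrite (Pu _ _ _ (occurs_refl _ _ _)) (Pv _ _ _ (occurs_refl _ _ _)).
rewrite (IHu _ _ (fun c a s occ _ => Pu c a s occ)).
by rewrite (IHv _ _ (fun c a s occ _ => Pv c a s occ)).
Qed.

Definition binds_once (b : term) : bool := count_mem 0 (fv_seq b) == 1.
Definition binds_last (b : term) : bool := last 1 (fv_seq b) == 0.

Lemma size_fv t : all_lams binds_once t ->
  size (fv_seq t) + unaryc (skeleton t) = leafc (skeleton t).
Proof.
elim: t => [//|b IH|u IHu v IHv] /=.
  case/andP=> /eqP once_b /IH <-; rewrite size_map size_filter.
  by rewrite -(count_predC (pred1 0)) once_b addnS.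
by case/andP=> /IHu <- /IHv <-; rewrite size_cat; lia.
Qed.

Lemma lu_pos_skeleton t :
  all_lams binds_once t -> lu_pos (skeleton t) = (fv_seq t != [::]).
Proof.
move=> once_t; rewrite /lu_pos -(size_fv once_t) -{1}[unaryc _]add0n ltn_add2r.
by rewrite lt0n size_eq0.
Qed.

Lemma two_connectedE t :
  linear_term t -> two_connected t <-> all_sub lu_pos (skeleton t).
Proof.
case/andP=> t_closed once_t.
have pos_occ c a s :
    occurs c a s t [::] [::] -> lu_pos (skeleton c) = (fv_seq c != [::]).
  by move/occurs_all_lams/(_ once_t)/lu_pos_skeleton.
split=> [tc|pos_t].
  apply: (all_sub_occurs (p := [::]) (stk := [::])) => c a s occ a0.
  by rewrite (pos_occ _ _ _ occ) (two_connected_fv tc occ).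
apply: fv_two_connected => // c a s occ a0.
by rewrite -(pos_occ _ _ _ occ) (occurs_all_sub occ).
Qed.

Definition is_unary (S : ubtree) : bool := if S is Unary _ then true else false.

Fixpoint skel_normal (S : ubtree) : bool :=
  match S with
  | Leaf => true
  | Unary S' => skel_normal S'
  | Binary l r => [&& ~~ is_unary l, skel_normal l & skel_normal r]
  end.

Lemma normal_skeleton t : normal t = skel_normal (skeleton t).
Proof. by elim: t => //= u -> v ->; case: u. Qed.

Lemma atoms_leafc t : atoms t = leafc (skeleton t).
Proof. by elim: t => //= u -> v ->. Qed.

Definition good_skeleton (S : ubtree) : bool :=
  [&& leafc S == unaryc S, skel_normal S & all_sub lu_pos S].

Lemma S2_good n S : S2 n S -> good_skeleton S /\ leafc S = n.
Proof.
move=> [t [lin_t [norm_t [_ [tc_t [<- <-]]]]]]; rewrite atoms_leafc; split=> //.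
case/andP: (lin_t) => /eqP t_closed /size_fv; rewrite /good_skeleton t_closed add0n => ->.
by rewrite eqxx -normal_skeleton norm_t -two_connectedE.
Qed.

Definition nfv (S : ubtree) : nat := leafc S - unaryc S.

(* [build S ids] has skeleton [S] and free atoms, from left to right, of de
   Bruijn indices [ids]; each abstraction binds the last atom of its body. *)
Fixpoint build (S : ubtree) (ids : seq nat) : term :=
  match S with
  | Leaf => Var (head 0 ids)
  | Unary S' => Lam (build S' (map succn ids ++ [:: 0]))
  | Binary l r => App (build l (take (nfv l) ids)) (build r (drop (nfv l) ids))
  end.

Lemma skeleton_build S ids : skeleton (build S ids) = S.
Proof. by elim: S ids => //= [S IH|l IHl r IHr] ids; rewrite ?IH ?IHl ?IHr. Qed.

Lemma fv_build S ids :
  all_sub lu_pos S -> size ids = nfv S -> fv_seq (build S ids) = ids.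
Proof.
rewrite /nfv; elim: S ids => [|S IH|l IHl r IHr] ids /=.
- by case: ids => [|i []].
- case/andP=> pos_S /IH {}IH size_ids; rewrite IH; last first.
    by rewrite size_cat size_map size_ids /=; move: pos_S; rewrite /lu_pos; lia.
  by elim: ids {size_ids IH} => //= i ids ->.
case/and4P=> /ltnW pos_l /ltnW pos_r /IHl {}IHl /IHr {}IHr size_ids.
rewrite IHl ?IHr ?cat_take_drop // ?size_drop ?size_takel // size_ids /nfv; lia.
Qed.

Lemma all_lams_predI (P Q : pred term) t :
  all_lams (predI P Q) t = all_lams P t && all_lams Q t.
Proof.
elim: t => //= [b ->|u -> v ->]; first by rewrite -!andbA; congr (_ && _); rewrite andbCA.
by rewrite andbACA.
Qed.

Lemma all_lams_build S ids : all_sub lu_pos S -> size ids = nfv S ->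
  all_lams (predI binds_once binds_last) (build S ids).
Proof.
rewrite /nfv; elim: S ids => [//|S IH|l IHl r IHr] ids /=.
- case/andP=> pos_S sub_S size_ids.
  have size_ids' : size (map succn ids ++ [:: 0]) = nfv S.
    by rewrite size_cat size_map size_ids /nfv /=; move: pos_S; rewrite /lu_pos; lia.
  rewrite IH // andbT /= /binds_once /binds_last fv_build // last_cat eqxx andbT.
  by rewrite count_cat /= addn1 eqSS; apply/eqP/count_memPn/mapP => -[].
case/and4P=> /ltnW pos_l /ltnW pos_r sub_l sub_r size_ids.
rewrite IHl ?IHr ?size_drop ?size_takel ?size_ids /nfv //; lia.
Qed.

Lemma good_S2 S : good_skeleton S -> S2 (leafc S) S.
Proof.
case/and3P=> /eqP closed_S norm_S sub_S.
have nfv0 : size ([::] : seq nat) = nfv S by rewrite /nfv closed_S subnn.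
have /[!all_lams_predI] /andP[once_t last_t] := all_lams_build sub_S nfv0.
exists (build S [::]).
have lin_t : linear_term (build S [::]) by rewrite /linear_term /closed_term fv_build.
rewrite atoms_leafc normal_skeleton skeleton_build two_connectedE //.
by rewrite skeleton_build.
Qed.

Lemma S2E n S : S2 n S <-> good_skeleton S /\ leafc S = n.
Proof. by split=> [/S2_good|[/good_S2 + <-]]. Qed.

(** * Inverting psi *)

Section Inverse.

Local Open Scope ring_scope.

Lemma lu_posE S : lu_pos S = (0 < lu S).
Proof. by rewrite /lu_pos /lu; lia. Qed.

Lemma lu_binary l r : lu (Binary l r) = lu l + lu r.
Proof. by rewrite /lu /=; lia. Qed.

Lemma leafc_gt0 S : (0 < leafc S)%N.
Proof. by elim: S => //= l + r; lia. Qed.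

Fixpoint unaries (k : nat) (X : ubtree) : ubtree :=
  if k is k'.+1 then Unary (unaries k' X) else X.

Fixpoint ucount (R : ubtree) : nat := if R is Unary R' then (ucount R').+1 else 0.

Lemma unaries_strip R : unaries (ucount R) (strip_unary R) = R.
Proof. by elim: R => //= R ->. Qed.

Lemma lu_strip R : lu (strip_unary R) = lu R + (ucount R)%:Z.
Proof. by rewrite /lu; elim: R => //= R IH; lia. Qed.

Lemma strip_nonunary X : ~~ is_unary X -> strip_unary X = X.
Proof. by case: X. Qed.

Lemma strip_unaries k X : strip_unary (unaries k X) = strip_unary X.
Proof. by elim: k. Qed.

Lemma psi_kids_unaries k X : psi_kids (unaries k X) = psi_kids X.
Proof. by elim: k. Qed.

Lemma lu_unaries k X : lu (unaries k X) = lu X - k%:Z.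
Proof. by rewrite /lu; elim: k => [|k IH] /=; lia. Qed.

Lemma leafc_unaries k X : leafc (unaries k X) = leafc X.
Proof. by elim: k. Qed.

Lemma unaryc_unaries k X : unaryc (unaries k X) = (k + unaryc X)%N.
Proof. by elim: k => //= k ->. Qed.

Lemma skel_normal_unaries k X : skel_normal (unaries k X) = skel_normal X.
Proof. by elim: k. Qed.

Lemma all_sub_unaries k X :
  lu_pos (unaries k X) -> all_sub lu_pos X -> all_sub lu_pos (unaries k X).
Proof.
elim: k => // k IH pos_k sub_X.
have pos_k' : lu_pos (unaries k X).
  by move: pos_k; rewrite !lu_posE !lu_unaries; clear; lia.
by rewrite /= pos_k' IH.
Qed.

Lemma sum_labels_cons c cs : sum_labels (c :: cs) = label c + sum_labels cs.
Proof. by rewrite /sum_labels big_cons. Qed.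

Lemma nonroot_ok_label T : nonroot_ok T -> 0 <= label T.
Proof. by case: T => l cs /and4P[]. Qed.

Lemma sum_labels_ge0 cs : all nonroot_ok cs -> 0 <= sum_labels cs.
Proof.
elim: cs => [|c cs IH]; first by rewrite /sum_labels big_nil.
by case/andP=> /nonroot_ok_label c_ge0 /IH; rewrite sum_labels_cons; apply: addr_ge0.
Qed.

Lemma ltree_eta T : LNode (label T) (kids T) = T.
Proof. by case: T. Qed.

Lemma psi_kids_binary l r : ~~ is_unary l ->
  psi_kids (Binary l r) = LNode (lu r) (psi_kids r) :: psi_kids l.
Proof. by case: l. Qed.

Lemma sum_labels_psi_kids R : skel_normal R ->
  sum_labels (psi_kids R) = lu (strip_unary R) - 1.
Proof.
elim: R => [|R IH|l IHl r IHr] norm_R; first by rewrite /sum_labels big_nil.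
  exact: IH.
case/and3P: norm_R => nu_l /IHl IHl' _.
rewrite psi_kids_binary // sum_labels_cons IHl' /= lu_binary strip_nonunary //; lia.
Qed.

Lemma lnodes_psi_kids R : skel_normal R ->
  sumn (map lnodes (psi_kids R)) = (leafc R).-1.
Proof.
elim: R => [|R IH|l IHl r IHr] norm_R //; first exact: IH.
case/and3P: norm_R => nu_l /IHl IHl' /IHr IHr'.
rewrite psi_kids_binary //= IHl' IHr'.
by have := leafc_gt0 l; have := leafc_gt0 r; lia.
Qed.

Definition nonzero_labels : ltree -> bool := all_labels (fun l => l != 0).

Lemma psi_kids_ok R : skel_normal R -> all_sub lu_pos R ->
  all nonroot_ok (psi_kids R) && all nonzero_labels (psi_kids R).
Proof.
elim: R => [|R IH|l IHl r IHr] norm_R sub_R //.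
  by case/andP: sub_R => _; apply: IH.
case/and3P: norm_R => nu_l norm_l norm_r; case/and4P: sub_R => _ pos_r sub_l sub_r.
rewrite psi_kids_binary //=; case/andP: (IHl norm_l sub_l) => -> ->.
case/andP: (IHr norm_r sub_r) => ok_kids nz_kids.
have := sum_labels_psi_kids norm_r; rewrite lu_strip => sum_r.
move: pos_r; rewrite lu_posE => pos_r.
rewrite /nonzero_labels /= ok_kids nz_kids !andbT.
apply/andP; split; last by clear -pos_r; lia.
apply/and3P; split; [|by clear -pos_r; lia|by clear -pos_r sum_r; lia].
apply/implyP => /nilP kids0; move: sum_r; rewrite kids0 /sum_labels big_nil.
by clear -pos_r; lia.
Qed.

Lemma psi_Vplus S : good_skeleton S -> Vplus (leafc S).-1 (psi S).
Proof.
case/and3P=> _ norm_S sub_S.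
have /andP[ok_kids nz_kids] := psi_kids_ok norm_S sub_S.
have sum_ge0 := sum_labels_ge0 ok_kids.
have sum_S := sum_labels_psi_kids norm_S.
split; rewrite /= ?ok_kids ?nz_kids ?andbT.
- apply/andP; split; last by rewrite sum_S; clear; apply/eqP; lia.
  apply/implyP => /nilP kids0; move: sum_S; rewrite kids0 /sum_labels big_nil.
  by clear; lia.
- by rewrite /lsize /= lnodes_psi_kids.
by move: sum_S sum_ge0; clear; lia.
Qed.

(* A node with label [l] and children [cs] comes from a subtree [R] with
   [lu R = l] whose first binary node starts the left spine built from [cs];
   [lu] of that spine is [1 + sum_labels cs], so [R] starts with
   [1 + sum_labels cs - l] unary nodes. *)
Fixpoint unpsi_node (T : ltree) : ubtree :=
  let: LNode l cs := T in
  unaries (absz (1 + sum_labels cs - l)%R)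
    (foldr (fun c X => Binary X (unpsi_node c)) Leaf cs).

Definition spine (cs : seq ltree) : ubtree :=
  foldr (fun c X => Binary X (unpsi_node c)) Leaf cs.

Definition unpsi (T : ltree) : ubtree :=
  let: LNode l cs := T in unaries (absz l) (spine cs).

Lemma unpsi_nodeE l cs :
  unpsi_node (LNode l cs) = unaries (absz (1 + sum_labels cs - l)%R) (spine cs).
Proof. by []. Qed.

Lemma spine_cons c cs : spine (c :: cs) = Binary (spine cs) (unpsi_node c).
Proof. by []. Qed.

Lemma spine_nonunary cs : ~~ is_unary (spine cs).
Proof. by case: cs. Qed.

Lemma spine_psi_kids R : skel_normal R -> spine (psi_kids R) = strip_unary R.
Proof.
elim: R => [|R IH|l IHl r IHr] norm_R //; first exact: IH.
case/and3P: norm_R => nu_l /IHl IHl' norm_r.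
rewrite psi_kids_binary // spine_cons IHl' strip_nonunary // unpsi_nodeE IHr //.
have -> : 1 + sum_labels (psi_kids r) - lu r = (ucount r)%:Z.
  by rewrite sum_labels_psi_kids // lu_strip; lia.
by rewrite unaries_strip.
Qed.

Lemma unpsiK S : good_skeleton S -> unpsi (psi S) = S.
Proof.
case/and3P=> /eqP closed_S norm_S _; rewrite /= spine_psi_kids //.
have -> : lu (strip_unary S) = (ucount S)%:Z by rewrite lu_strip /lu closed_S; lia.
exact: unaries_strip.
Qed.

Lemma forest_ind (P : ltree -> Prop) (Q : seq ltree -> Prop) :
  Q [::] -> (forall c cs, P c -> Q cs -> Q (c :: cs)) ->
  (forall l cs, Q cs -> P (LNode l cs)) -> forall cs, Q cs.
Proof.
move=> Qnil Qcons PQ; have treeP : forall T, P T.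
  fix F 1 => -[l cs]; apply: PQ.
  by elim: cs => // c cs IHcs; apply: Qcons (F c) IHcs.
by elim=> // c cs; apply: Qcons.
Qed.

Lemma spine_ok cs : all nonroot_ok cs -> all nonzero_labels cs ->
  [/\ psi_kids (spine cs) = cs, lu (spine cs) = 1 + sum_labels cs,
      skel_normal (spine cs) & all_sub lu_pos (spine cs)].
Proof.
pose node_ok T := nonroot_ok T -> nonzero_labels T ->
  [/\ psi_kids (unpsi_node T) = kids T, lu (unpsi_node T) = label T,
      skel_normal (unpsi_node T), lu_pos (unpsi_node T)
    & all_sub lu_pos (unpsi_node T)].
elim/(forest_ind (P := node_ok)): cs => [|c cs ok_c IH|l cs IH].
- by rewrite /= /sum_labels big_nil.
- case/andP=> ok_c' ok_cs /andP[nz_c nz_cs].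
  have [kids_c lu_c norm_c pos_c sub_c] := ok_c ok_c' nz_c.
  have [kids_cs lu_cs norm_cs sub_cs] := IH ok_cs nz_cs.
  have sum_ge0 := sum_labels_ge0 ok_cs; have label_ge0 := nonroot_ok_label ok_c'.
  rewrite spine_cons psi_kids_binary ?spine_nonunary //.
  rewrite lu_binary lu_cs lu_c kids_c kids_cs ltree_eta sum_labels_cons.
  rewrite /= spine_nonunary norm_c norm_cs pos_c sub_c sub_cs lu_posE lu_cs !andbT.
  by split=> //; [move: label_ge0 sum_ge0 | move: sum_ge0]; clear; lia.
move=> /and4P[_ l_ge0 l_le ok_cs] /andP[l_nz nz_cs].
have [kids_cs lu_cs norm_cs sub_cs] := IH ok_cs nz_cs.
rewrite unpsi_nodeE; set j := absz _.
have j_def : j%:Z = 1 + sum_labels cs - l by rewrite /j gez0_abs; move: l_le; clear; lia.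
have lu_j : lu (unaries j (spine cs)) = l.
  by rewrite lu_unaries lu_cs j_def; clear; lia.
have pos_j : lu_pos (unaries j (spine cs)).
  by rewrite lu_posE lu_j; move: l_ge0 l_nz; clear; lia.
split=> //; rewrite ?psi_kids_unaries ?skel_normal_unaries //.
exact: all_sub_unaries.
Qed.

Lemma unpsi_Vplus m T : Vplus m T ->
  [/\ good_skeleton (unpsi T), leafc (unpsi T) = m.+1 & psi (unpsi T) = T].
Proof.
case: T => l cs [/and3P[_ /eqP l_def ok_cs] size_T /andP[l_nz nz_cs]].
have [kids_cs lu_cs norm_cs sub_cs] := spine_ok ok_cs nz_cs.
have sum_ge0 := sum_labels_ge0 ok_cs.
have [k k_def] : exists k, l = k.+1%:Z.
  by exists (absz l).-1; move: l_def sum_ge0; clear; lia.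
have psiK : psi (unpsi (LNode l cs)) = LNode l cs.
  rewrite /psi /= strip_unaries psi_kids_unaries strip_nonunary ?spine_nonunary //.
  by rewrite lu_cs kids_cs l_def.
have good : good_skeleton (unpsi (LNode l cs)).
  rewrite /good_skeleton /= k_def /= leafc_unaries unaryc_unaries.
  rewrite skel_normal_unaries norm_cs lu_posE lu_unaries lu_cs -l_def k_def.
  have -> : (leafc (spine cs) == k.+1 + unaryc (spine cs))%N.
    by apply/eqP; move: lu_cs; rewrite /lu -l_def k_def; clear; lia.
  by rewrite all_sub_unaries ?lu_posE ?lu_unaries ?lu_cs -?l_def ?k_def //; clear; lia.
split=> //; have [_ size_psi _] := psi_Vplus good.
by rewrite psiK size_T in size_psi; rewrite size_psi prednK ?leafc_gt0.
Qed.

End Inverse.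

Theorem proposition11 (n : nat) : 1 <= n ->
  [/\ (forall S, S2 n S -> Vplus n.-1 (psi S)),
      (forall S S', S2 n S -> S2 n S' -> psi S = psi S' -> S = S') &
      (forall T, Vplus n.-1 T -> exists S, S2 n S /\ psi S = T)].
Proof.
move=> n_gt0; split.
- by move=> S /S2E[good_S <-]; apply: psi_Vplus.
- move=> S S' /S2E[good_S _] /S2E[good_S' _] eq_psi.
  by rewrite -(unpsiK good_S) -(unpsiK good_S') eq_psi.
move=> T /unpsi_Vplus[good_T leaf_T psiK]; exists (unpsi T); split=> //.
by apply/S2E; rewrite leaf_T prednK.
Qed.
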